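(* Let $q_1,q_2\in[1,\infty]$ and $\alpha_1,\alpha_2\ge0$ satisfy $1=\frac1{q_1}+\frac1{q_2}$, and set $\alpha=\frac{\alpha_1}{q_1}+\frac{\alpha_2}{q_2}$ (with $1/\infty=0$). Then $$\|f_1f_2\|_{\mathfrak L^{1,\infty}(\log\mathfrak L)^\alpha}\le\|f_1\|_{\mathfrak L^{q_1,\infty}(\log\mathfrak L)^{\alpha_1}}\|f_2\|_{\mathfrak L^{q_2,\infty}(\log\mathfrak L)^{\alpha_2}}$$ for all $f_1\in\mathfrak L^{q_1,\infty}(\log\mathfrak L)^{\alpha_1}$, $f_2\in\mathfrak L^{q_2,\infty}(\log\mathfrak L)^{\alpha_2}$. Furthermore, $$|||\tilde f_1\tilde f_2|||_{1,\alpha;\rho}\le|||\tilde f_1|||_{q_1,\alpha_1;\rho}\,|||\tilde f_2|||_{q_2,\alpha_2;\rho}$$ for all $\tilde f_1\in\mathfrak L^{q_1,\infty}_{\rm ul}(\log\mathfrak L)^{\alpha_1}$, $\tilde f_2\in\mathfrak L^{q_2,\infty}_{\rm ul}(\log\mathfrak L)^{\alpha_2}$ and $\rho>0$.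
   Context: For $q\in[1,\infty)$, $\alpha\ge0$ and $f\in L^1_{\rm loc}(\mathbb R^n)$, $\|f\|_{\mathfrak L^{q,\infty}(\log\mathfrak L)^\alpha}:=\sup_{s>0}\{[\log(e+1/s)]^\alpha\sup_{|E|=s}\int_E|f|^q\,dx\}^{1/q}$ (inner sup over measurable $E$ with $|E|=s$); for $q=\infty$ it is $\|f\|_{L^\infty}$. $\mathfrak L^{q,\infty}(\log\mathfrak L)^\alpha$ is the set of $f\in L^1_{\rm loc}$ with finite norm. For $\rho>0$, $|||f|||_{q,\alpha;\rho}:=\sup_{z\in\mathbb R^n}\|f\chi_{B(z,\rho)}\|_{\mathfrak L^{q,\infty}(\log\mathfrak L)^\alpha}$; $\mathfrak L^{q,\infty}_{\rm ul}(\log\mathfrak L)^\alpha$ is the set of $f\in L^1_{\rm loc}$ with $|||f|||_{q,\alpha;1}<\infty$. *)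

From HB Require Import structures.
From mathcomp Require Import all_boot all_order all_algebra.
From mathcomp Require Import all_classical all_reals all_analysis.
From mathcomp Require Import ess_sup_inf.

Unset Strict Implicit.
Unset Printing Implicit Defensive.

Import Order.TTheory GRing.Theory Num.Theory.
Import numFieldNormedType.Exports.

Local Open Scope classical_set_scope.
Local Open Scope ring_scope.

(* Lebesgue measure on R^n = 'rV[R]_n, built as the Caratheodory       *)
(* extension of the Lebesgue outer measure                             *)

(* a type copy of R^n where every set is "measurable": only used to feed
   the library's outer-measure construction [mu_ext] (covers by arbitrary
   sets, the premeasure [pre_vol] being +oo on non-boxes). *)
Definition rn_all (R : realType) (n : nat) := 'rV[R]_n.
HB.instance Definition _ (R : realType) (n : nat) :=
  Choice.on (rn_all R n).
HB.instance Definition _ (R : realType) (n : nat) :=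
  isPointed.Build (rn_all R n) (0 : 'rV[R]_n).
HB.instance Definition _ (R : realType) (n : nat) :=
  @isMeasurable.Build default_measure_display (rn_all R n)
    discrete_measurable (@discrete_measurable0 _)
    (@discrete_measurableC _) (@discrete_measurableU _).

Definition box (R : realType) (n : nat) (a b : 'rV[R]_n) : set 'rV[R]_n :=
  [set x | forall i, a ord0 i <= x ord0 i < b ord0 i].

(* elementary volume: volume of A if A is a box, 0 on the empty set,
   +oo otherwise *)
Definition pre_vol (R : realType) (n : nat) (A : set (rn_all R n)) : \bar R :=
  if pselect (A = set0) then 0%E else
  ereal_inf [set ((\prod_(i < n) (ab.2 ord0 i - ab.1 ord0 i))%:E)%E |
             ab in [set ab : 'rV[R]_n * 'rV[R]_n |
                    (forall i, ab.1 ord0 i <= ab.2 ord0 i) /\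
                    A = box R n ab.1 ab.2]].

Lemma pre_vol0 (R : realType) (n : nat) : pre_vol R n set0 = 0%E.
Proof. rewrite /pre_vol; by destruct (pselect (@set0 (rn_all R n) = set0)). Qed.

Lemma pre_vol_ge0 (R : realType) (n : nat) (A : set (rn_all R n)) :
  (0 <= pre_vol R n A)%E.
Proof.
rewrite /pre_vol; destruct (pselect (A = set0)) as [h|h]; first by [].
apply: le_ereal_inf_tmp => _ [ab [Hab _] <-].
rewrite lee_fin; apply: prodr_ge0 => i _; rewrite subr_ge0; exact: Hab.
Qed.

Definition leb_outer (R : realType) (n : nat) : set (rn_all R n) -> \bar R :=
  mu_ext (pre_vol R n).

HB.instance Definition _ (R : realType) (n : nat) :=
  isOuterMeasure.Build _ _ (leb_outer R n)
    (mu_ext0 (@pre_vol0 R n) (@pre_vol_ge0 R n))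
    (mu_ext_ge0 (@pre_vol_ge0 R n))
    (le_mu_ext (pre_vol R n))
    (mu_ext_sigma_subadditive (@pre_vol_ge0 R n)).

Definition leb_om (R : realType) (n : nat) :
  {outer_measure set (rn_all R n) -> \bar R} := leb_outer R n.

Definition Rn (R : realType) (n : nat) := caratheodory_type (leb_om R n).

Definition lebn (R : realType) (n : nat) :
  {measure set (Rn R n) -> \bar R} :=
  (leb_om R n : set (caratheodory_type (leb_om R n)) -> \bar R).

Local Open Scope ereal_scope.

Definition eball (R : realType) (n : nat) (z : 'rV[R]_n) (r : R) : set (Rn R n) :=
  [set x : 'rV[R]_n | (\sum_(i < n) (x ord0 i - z ord0 i) ^+ 2 < r ^+ 2)%R].

Definition L1loc (R : realType) (n : nat) (f : 'rV[R]_n -> R) : Prop :=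
  measurable_fun [set: Rn R n] (f : Rn R n -> R) /\
  forall (z : 'rV[R]_n) (r : R), (0 < r)%R ->
    (lebn R n).-integrable (eball R n z r) (fun x => (f x)%:E).

Definition logw (R : realType) (alpha s : R) : R :=
  (ln (expR 1 + s^-1)) `^ alpha.

Definition LlogL_norm (R : realType) (n : nat) (q : \bar R) (alpha : R)
    (f : 'rV[R]_n -> R) : \bar R :=
  match q with
  | r%:E =>
      ereal_sup [set ((logw R alpha s)%:E *
                      ereal_sup [set \int[lebn R n]_(x in E) ((`|f x| `^ r)%R)%:E
                                | E in [set E : set (Rn R n) |
                                        measurable E /\ lebn R n E = s%:E]])
                     `^ (r^-1)
                | s in [set s : R | (0 < s)%R]]
  | +oo => ess_sup (lebn R n) (fun x => (`|f x|)%:E)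
  | -oo => 0 (* not used: q >= 1 *)
  end.

Definition in_LlogL (R : realType) (n : nat) (q : \bar R) (alpha : R)
    (f : 'rV[R]_n -> R) : Prop :=
  L1loc R n f /\ LlogL_norm R n q alpha f < +oo.

Definition ul_norm (R : realType) (n : nat) (q : \bar R) (alpha rho : R)
    (f : 'rV[R]_n -> R) : \bar R :=
  ereal_sup [set LlogL_norm R n q alpha
                   (fun x => (f x * \1_(eball R n z rho) x)%R)
            | z in [set: 'rV[R]_n]].

Definition in_ul (R : realType) (n : nat) (q : \bar R) (alpha : R)
    (f : 'rV[R]_n -> R) : Prop :=
  L1loc R n f /\ ul_norm R n q alpha 1%R f < +oo.

Definition recip_exp (R : realType) (q : \bar R) : R :=
  match q with r%:E => r^-1 | _ => 0%R end.

(* For a level s > 0 and a measurable E with measure s, the weight splits as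
   log(e + 1/s)^alpha = log(e + 1/s)^(alpha1/q1) * log(e + 1/s)^(alpha2/q2),
   and Hoelder's inequality on E (or, when one exponent is infinite, the bound
   by the essential supremum) bounds the integral of |f1 f2| over E by the
   product of the (1/q_i)-th powers of the integrals of |f_i|^q_i over E.
   Taking suprema over E and then over s gives the first inequality.  The
   uniformly local one follows by applying it to the f_i cut off by the
   indicator of a ball, which is idempotent, and taking suprema over the
   centres. *)

From mathcomp Require Import all_boot all_order all_algebra.
From mathcomp Require Import all_classical all_reals all_analysis.
From mathcomp Require Import ess_sup_inf measurable_realfun.
Import Order.TTheory GRing.Theory Num.Theory.
Local Open Scope classical_set_scope.
Local Open Scope ring_scope.
Local Open Scope ereal_scope.

Section restricted_integrals.
Local Set Implicit Arguments.
Local Unset Strict Implicit.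
Import HBNNSimple.
Context d (T : measurableType d) (R : realType).
Variable mu : {measure set T -> \bar R}.

(* Unlike [ge0_le_integral], no measurability is required. *)
Lemma ge0_le_integralT (f g : T -> \bar R) : (forall x, 0 <= f x) ->
  (forall x, f x <= g x) -> \int[mu]_x f x <= \int[mu]_x g x.
Proof.
move=> f0 fg; have g0 x : 0 <= g x by apply: le_trans (fg x).
rewrite !ge0_integralTE//; apply: le_ereal_sup => _ [h hf <-].
by exists h => // x; apply: le_trans (hf x) (fg x).
Qed.

(* [B] need not be measurable, so the balls of the uniformly local norm never
   have to be shown measurable: a simple function below [H \_ B] is positive
   only on a measurable subset of [B]. *)
Lemma ge0_integral_patch_le (H : T -> \bar R) (B : set T) (M : \bar R) :
  (forall x, 0 <= H x) ->
  (forall K, measurable K -> K `<=` B -> \int[mu]_(x in K) H x <= M) ->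
  \int[mu]_x (H \_ B) x <= M.
Proof.
move=> H0 HM; have HB0 x : 0 <= (H \_ B) x by rewrite /patch; case: ifP.
rewrite ge0_integralTE//; apply: ge_ereal_sup => _ [h hle <-].
have KB : h @^-1` `]0%R, +oo[ `<=` B.
  move=> x /=; rewrite in_itv /= andbT => hx.
  have := hle x; rewrite /patch; case: ifPn => [/set_mem//|_].
  by rewrite lee_fin leNgt hx.
have mK : measurable (h @^-1` `]0%R, +oo[) by exact: measurable_sfunP.
apply: le_trans (HM _ mK KB).
rewrite -integralT_nnsfun [leRHS]integral_mkcond.
apply: ge0_le_integralT => x; first by rewrite lee_fin fun_ge0.
rewrite /patch; case: ifPn => [xK|/negP xK].
  by have := hle x; rewrite /patch mem_set//; apply: KB; apply: set_mem.
rewrite lee_fin leNgt; apply/negP => hx; apply: xK.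
by apply/mem_set => /=; rewrite in_itv /= hx.
Qed.

Lemma le_integral_mul_indic (u : T -> R) (B E K : set T) (p : R) :
  p != 0%R -> K `<=` E `&` B ->
  \int[mu]_(x in K) (`|u x| `^ p)%:E <=
  \int[mu]_(x in E) (`|u x * \1_B x| `^ p)%:E.
Proof.
move=> p0 KEB; rewrite (integral_mkcond K) (integral_mkcond E).
apply: ge0_le_integralT => x.
  by rewrite /patch; case: ifP => // _; rewrite lee_fin powR_ge0.
rewrite /patch; case: ifPn => [xK|_].
  have [Ex Bx] := KEB x (set_mem xK).
  by rewrite (mem_set Ex) indicE (mem_set Bx) mulr1.
by case: ifP => // _; rewrite lee_fin powR_ge0.
Qed.

Lemma integral1_mul_indic_le (w : T -> R) (B E : set T) (M : \bar R) :
  measurable E ->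
  (forall K, measurable K -> K `<=` E `&` B ->
    \int[mu]_(x in K) (`|w x|)%:E <= M) ->
  \int[mu]_(x in E) (`|w x * \1_B x| `^ 1)%:E <= M.
Proof.
move=> mE wM; rewrite integral_mkcond.
have -> : (fun x => (`|w x * \1_B x| `^ 1)%:E) \_ E =
          ((fun x => (`|w x|)%:E) \_ E) \_ B.
  apply/funext => x; rewrite /patch indicE.
  case: ifPn => _; case: ifPn => _ //=.
  - by rewrite mulr1 powRr1.
  - by rewrite mulr0 normr0 powR0.
apply: ge0_integral_patch_le => [x|K mK KB].
  by rewrite /patch; case: ifP => // _; rewrite lee_fin.
rewrite -integral_mkcondl; apply: wM; first exact: measurableI.
by move=> x [Ex Kx]; split => //; apply: KB.
Qed.

Lemma Lnorm_mul_indic (f : T -> R) (K : set T) (p : R) : p != 0%R ->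
  'N[mu]_p%:E[EFin \o (fun x => f x * \1_K x)%R] =
  (\int[mu]_(x in K) (`|f x| `^ p)%:E) `^ p^-1.
Proof.
move=> p0; rewrite unlock; congr (_ `^ _); rewrite [RHS]integral_mkcond.
apply: eq_integral => x _; rewrite /patch /= indicE.
by case: ifPn => _; rewrite ?mulr1 // mulr0 normr0 powR0.
Qed.

Lemma hoelder_on (u v : T -> R) (K : set T) (p q : R) :
  measurable K -> measurable_fun setT u -> measurable_fun setT v ->
  (0 < p)%R -> (0 < q)%R -> (p^-1 + q^-1 = 1)%R ->
  \int[mu]_(x in K) (`|u x * v x|)%:E <=
  (\int[mu]_(x in K) (`|u x| `^ p)%:E) `^ p^-1 *
  (\int[mu]_(x in K) (`|v x| `^ q)%:E) `^ q^-1.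
Proof.
move=> mK mfu mfv p0 q0 pq.
have mind : measurable_fun setT (\1_K : T -> R) by exact: measurable_indic.
rewrite -!Lnorm_mul_indic ?gt_eqF//.
rewrite [leLHS](_ : _ = 'N[mu]_1[EFin \o
    ((fun x => u x * \1_K x) \* (fun x => v x * \1_K x))%R]); last first.
  rewrite Lnorm1 [LHS]integral_mkcond; apply: eq_integral => x _.
  rewrite /patch /= indicE.
  by case: ifPn => _; rewrite ?mulr1 // !mulr0 normr0.
exact: hoelder (measurable_funM mfu mind) (measurable_funM mfv mind) p0 q0 pq.
Qed.

Lemma ae_bounded_integral_le (u v : T -> R) (K : set T) (M : \bar R) :
  measurable K -> measurable_fun setT u -> measurable_fun setT v -> 0 <= M ->
  (\forall x \ae mu, K x -> (`|u x|)%:E <= M) ->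
  \int[mu]_(x in K) (`|u x * v x|)%:E <= M * \int[mu]_(x in K) (`|v x|)%:E.
Proof.
move=> mK mfu mfv M0 uM.
have muvK : measurable_fun K (fun x => (`|u x * v x|)%:E).
  apply/measurable_EFinP; apply: measurableT_comp => //.
  by apply: measurable_funTS; apply: measurable_funM.
have mvK : measurable_fun K (fun x => (`|v x|)%:E).
  apply/measurable_EFinP; apply: measurableT_comp => //.
  exact: measurable_funTS.
case: M M0 uM => [m| |] // m0 uM.
  apply: (@le_trans _ _ (\int[mu]_(x in K) (m%:E * (`|v x|)%:E))).
    apply: ae_ge0_le_integral => //.
    - by move=> x _; rewrite mule_ge0.
    - by apply: emeasurable_funM => //; apply: measurable_cst.
    apply: filterS uM => x h /h; rewrite -EFinM !lee_fin normrM => hu.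
    by rewrite ler_wpM2r.
  by rewrite ge0_integralZl_EFin.
have [I0|Ipos] := eqVneq (\int[mu]_(x in K) (`|v x|)%:E) 0; last first.
  by rewrite gt0_mulye ?leey // lt0e Ipos integral_ge0.
rewrite I0 mule0 -(integral0 mu K).
have : \int[mu]_(x in K) `|(EFin \o v) x| = 0.
  by rewrite -I0; apply: eq_integral => x _; rewrite abse_EFin.
have mEvK : measurable_fun K (EFin \o v).
  by apply/measurable_EFinP; exact: measurable_funTS.
move/(ae_eq_integral_abs mu mK mEvK) => v0; apply: ae_ge0_le_integral => //.
apply: filterS v0 => x h Kx.
by move: (h Kx) => /= [->]; rewrite mulr0 normr0.
Qed.

Lemma hoelder_mul_indic (u v : T -> R) (B E : set T) (p q : R) :
  measurable E -> measurable_fun setT u -> measurable_fun setT v ->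
  (0 < p)%R -> (0 < q)%R -> (p^-1 + q^-1 = 1)%R ->
  \int[mu]_(x in E) (`|u x * v x * \1_B x| `^ 1)%:E <=
  (\int[mu]_(x in E) (`|u x * \1_B x| `^ p)%:E) `^ p^-1 *
  (\int[mu]_(x in E) (`|v x * \1_B x| `^ q)%:E) `^ q^-1.
Proof.
move=> mE mfu mfv p0 q0 pq.
apply: (integral1_mul_indic_le (w := fun x => (u x * v x)%R)) => // K mK KEB.
apply: le_trans (hoelder_on mK mfu mfv p0 q0 pq) _.
have ge0_int r (w : T -> R) D :
    \int[mu]_(x in D) (`|w x| `^ r)%:E \in `[0, +oo].
  rewrite in_itv /= leey andbT.
  by apply: integral_ge0 => x _; rewrite lee_fin powR_ge0.
have restrict r (w : T -> R) : (0 < r)%R ->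
    (\int[mu]_(x in K) (`|w x| `^ r)%:E) `^ r^-1 <=
    (\int[mu]_(x in E) (`|w x * \1_B x| `^ r)%:E) `^ r^-1.
  move=> r0; apply: gt0_ler_poweR; rewrite ?ge0_int //.
    by rewrite invr_ge0 ltW.
  exact: le_integral_mul_indic (lt0r_neq0 r0) KEB.
by apply: lee_pmul; rewrite ?poweR_ge0 ?restrict.
Qed.

Lemma ess_sup_mul_indic_le (u v : T -> R) (B E : set T) :
  measurable E -> measurable_fun setT u -> measurable_fun setT v ->
  0 <= ess_sup mu (fun x => (`|u x * \1_B x|)%:E) ->
  \int[mu]_(x in E) (`|u x * v x * \1_B x| `^ 1)%:E <=
  ess_sup mu (fun x => (`|u x * \1_B x|)%:E) *
  \int[mu]_(x in E) (`|v x * \1_B x| `^ 1)%:E.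
Proof.
move=> mE mfu mfv M0.
apply: (integral1_mul_indic_le (w := fun x => (u x * v x)%R)) => // K mK KEB.
apply: le_trans (ae_bounded_integral_le mK mfu mfv M0 _) _.
  apply: filterS (ess_sup_ge mu (fun x => (`|u x * \1_B x|)%:E)) => x + Kx.
  by have [_ Bx] := KEB x Kx; rewrite indicE (mem_set Bx) mulr1.
apply: (lee_wpmul2l M0).
have -> : \int[mu]_(x in K) (`|v x|)%:E = \int[mu]_(x in K) (`|v x| `^ 1)%:E.
  by apply: eq_integral => x _; rewrite powRr1.
exact: le_integral_mul_indic (oner_neq0 R) KEB.
Qed.

End restricted_integrals.

Section LlogL_norms.
Local Set Implicit Arguments.
Local Unset Strict Implicit.
Context d (T : measurableType d) (R : realType).
Variable mu : {measure set T -> \bar R}.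

Lemma ln_expR1_addV_gt0 (s : R) : (0 < s)%R -> (0 < ln (expR 1 + s^-1))%R.
Proof.
move=> s0; apply: ln_gt0; apply: lt_le_trans (_ : 1 < expR 1)%R _.
  by rewrite expR_gt1.
by rewrite lerDl invr_ge0 ltW.
Qed.

Lemma logw_gt0 (alpha s : R) : (0 < s)%R -> (0 < logw R alpha s)%R.
Proof. by move=> s0; apply: powR_gt0; exact: ln_expR1_addV_gt0. Qed.

Lemma logw_convex (a1 a2 r1 r2 s : R) : (0 < s)%R ->
  logw R (a1 * r1^-1 + a2 * r2^-1) s =
  (logw R a1 s `^ r1^-1 * logw R a2 s `^ r2^-1)%R.
Proof.
move=> s0; rewrite /logw -!powRrM powRD //.
by apply/implyP => _; rewrite gt_eqF // ln_expR1_addV_gt0.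
Qed.

(* This is -oo when no measurable set has measure [s]. *)
Definition sup_integral_size (r : R) (f : T -> R) (s : R) : \bar R :=
  ereal_sup [set \int[mu]_(x in E) (`|f x| `^ r)%:E
            | E in [set E : set T | measurable E /\ mu E = s%:E]].

Definition LlogL_term (r alpha : R) (f : T -> R) (s : R) : \bar R :=
  ((logw R alpha s)%:E * sup_integral_size r f s) `^ r^-1.

(* [LlogL_norm R n] unfolds to [LlogLnorm (lebn R n)]. *)
Definition LlogLnorm (q : \bar R) (alpha : R) (f : T -> R) : \bar R :=
  match q with
  | r%:E =>
      ereal_sup [set LlogL_term r alpha f s | s in [set s : R | (0 < s)%R]]
  | +oo => ess_sup mu (fun x => (`|f x|)%:E)
  | -oo => 0
  end.

Lemma LlogL_term_le_norm (r alpha s : R) (f : T -> R) : (0 < s)%R ->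
  LlogL_term r alpha f s <= LlogLnorm r%:E alpha f.
Proof. by move=> s0; apply: ereal_sup_ubound; exists s. Qed.

Lemma LlogLnorm_fin_ge0 (r alpha : R) (f : T -> R) :
  0 <= LlogLnorm r%:E alpha f.
Proof. exact: le_trans (poweR_ge0 _ _) (LlogL_term_le_norm _ _ _ ltr01). Qed.

Lemma LlogLnorm_ge0 (q : \bar R) (alpha : R) (f : T -> R) :
  0 < mu setT -> 0 <= LlogLnorm q alpha f.
Proof.
case: q => [r| |] // mu_gt0; first exact: LlogLnorm_fin_ge0.
by apply: ess_sup_gee => //; apply: nearW => x; rewrite lee_fin normr_ge0.
Qed.

Lemma LlogLnorm_fin_measure0 (r alpha : R) (f : T -> R) :
  mu setT = 0 -> r != 0%R -> LlogLnorm r%:E alpha f = 0.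
Proof.
move=> mu0 r0; apply/eqP; rewrite eq_le LlogLnorm_fin_ge0 andbT.
apply: ge_ereal_sup => _ [s s0 <-]; rewrite /LlogL_term /sup_integral_size.
rewrite [X in ereal_sup X](_ : _ = set0).
  by rewrite ereal_sup0 gt0_muleNy ?lte_fin ?logw_gt0 // poweRNyr // invr_neq0.
apply/seteqP; split => // y [E [mE muE] _].
have : mu E <= mu setT by apply: le_measure; rewrite ?inE.
by rewrite mu0 muE lee_fin leNgt s0.
Qed.

Lemma integral_le_LlogL_term (r alpha s : R) (f : T -> R) (E : set T) :
  (0 < r)%R -> (0 < s)%R -> measurable E -> mu E = s%:E ->
  ((logw R alpha s)%:E * \int[mu]_(x in E) (`|f x| `^ r)%:E) `^ r^-1 <=
  LlogL_term r alpha f s.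
Proof.
move=> r0 s0 mE muE.
have w0 : 0 <= (logw R alpha s)%:E by rewrite lee_fin ltW // logw_gt0.
have IS : \int[mu]_(x in E) (`|f x| `^ r)%:E <= sup_integral_size r f s.
  by apply: ereal_sup_ubound; exists E.
have I0 : 0 <= \int[mu]_(x in E) (`|f x| `^ r)%:E.
  by apply: integral_ge0 => x _; rewrite lee_fin powR_ge0.
apply: gt0_ler_poweR; first by rewrite invr_ge0 ltW.
- by rewrite in_itv /= leey andbT mule_ge0.
- by rewrite in_itv /= leey andbT mule_ge0 // (le_trans I0 IS).
- exact: lee_wpmul2l.
Qed.

Lemma LlogL_term1_le (alpha s : R) (f : T -> R) (y : \bar R) :
  (0 < s)%R -> 0 <= y ->
  (forall E, measurable E -> mu E = s%:E ->
    (logw R alpha s)%:E * \int[mu]_(x in E) (`|f x| `^ 1)%:E <= y) ->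
  LlogL_term 1 alpha f s <= y.
Proof.
move=> s0 y0 fy; rewrite /LlogL_term /sup_integral_size invr1.
set A := [set _ | _ in _].
have w0 := logw_gt0 alpha s0.
have [->|/set0P[a Aa]] := eqVneq A set0.
  by rewrite ereal_sup0 gt0_muleNy ?lte_fin // poweRNyr ?oner_neq0.
have A0 b : A b -> 0 <= b.
  by move=> [E _ <-]; apply: integral_ge0 => x _; rewrite lee_fin powR_ge0.
rewrite poweRe1; last first.
  rewrite mule_ge0 ?lee_fin ?(ltW w0) //.
  exact: le_trans (A0 a Aa) (ereal_sup_ubound Aa).
rewrite -ereal_sup_pZl //; apply: ge_ereal_sup => _ [b [E [mE muE] <-] <-].
exact: fy.
Qed.

Lemma LlogL_term_mul_le (u v : T -> R) (B : set T) (r1 r2 a1 a2 s : R) :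
  measurable_fun setT u -> measurable_fun setT v ->
  (0 < r1)%R -> (0 < r2)%R -> (r1^-1 + r2^-1 = 1)%R -> (0 < s)%R ->
  LlogL_term 1 (a1 * r1^-1 + a2 * r2^-1) (fun x => u x * v x * \1_B x)%R s <=
  LlogL_term r1 a1 (fun x => u x * \1_B x)%R s *
  LlogL_term r2 a2 (fun x => v x * \1_B x)%R s.
Proof.
move=> mfu mfv r10 r20 rr s0.
apply: LlogL_term1_le => // [|E mE muE]; first by rewrite mule_ge0 ?poweR_ge0.
have w1 := logw_gt0 a1 s0; have w2 := logw_gt0 a2 s0.
have I0 r (f : T -> R) : 0 <= \int[mu]_(x in E) (`|f x| `^ r)%:E.
  by apply: integral_ge0 => x _; rewrite lee_fin powR_ge0.
rewrite logw_convex // EFinM -[(logw R a1 s `^ _)%:E]poweR_EFin.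
rewrite -[(logw R a2 s `^ _)%:E]poweR_EFin.
have w0 : 0 <= (logw R a1 s)%:E `^ r1^-1 * (logw R a2 s)%:E `^ r2^-1.
  by rewrite mule_ge0 ?poweR_ge0.
have := hoelder_mul_indic mu B mE mfu mfv r10 r20 rr.
move/(lee_wpmul2l w0)/le_trans; apply.
rewrite muleACA -!poweRM ?lee_fin ?I0 ?(ltW w1) ?(ltW w2) //.
by apply: lee_pmul; rewrite ?poweR_ge0 ?integral_le_LlogL_term.
Qed.

Lemma LlogL_term_mul_le_ess_sup (u v : T -> R) (B : set T) (a s : R) :
  measurable_fun setT u -> measurable_fun setT v -> (0 < s)%R ->
  0 <= ess_sup mu (fun x => (`|u x * \1_B x|)%:E) ->
  LlogL_term 1 a (fun x => u x * v x * \1_B x)%R s <=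
  ess_sup mu (fun x => (`|u x * \1_B x|)%:E) *
  LlogL_term 1 a (fun x => v x * \1_B x)%R s.
Proof.
move=> mfu mfv s0 M0.
apply: LlogL_term1_le => // [|E mE muE]; first by rewrite mule_ge0 ?poweR_ge0.
have w0 : 0 <= (logw R a s)%:E by rewrite lee_fin ltW // logw_gt0.
apply: le_trans (lee_wpmul2l w0 (ess_sup_mul_indic_le mE mfu mfv M0)) _.
rewrite muleCA; apply: (lee_wpmul2l M0).
have := integral_le_LlogL_term a (fun x => v x * \1_B x)%R ltr01 s0 mE muE.
rewrite invr1 poweRe1 // mule_ge0 //.
by apply: integral_ge0 => x _; rewrite lee_fin powR_ge0.
Qed.

Lemma LlogLnorm_mul_indic_le_fin (u v : T -> R) (B : set T) (r1 r2 a1 a2 : R) :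
  measurable_fun setT u -> measurable_fun setT v ->
  (0 < r1)%R -> (0 < r2)%R -> (r1^-1 + r2^-1 = 1)%R ->
  LlogLnorm 1 (a1 * r1^-1 + a2 * r2^-1) (fun x => u x * v x * \1_B x)%R <=
  LlogLnorm r1%:E a1 (fun x => u x * \1_B x)%R *
  LlogLnorm r2%:E a2 (fun x => v x * \1_B x)%R.
Proof.
move=> mfu mfv r10 r20 rr; apply: ge_ereal_sup => _ [s s0 <-].
apply: le_trans (LlogL_term_mul_le B a1 a2 mfu mfv r10 r20 rr s0) _.
by apply: lee_pmul; rewrite ?poweR_ge0 ?LlogL_term_le_norm.
Qed.

Lemma LlogLnorm_mul_indic_le_ess_sup (u v : T -> R) (B : set T) (a1 a2 : R) :
  measurable_fun setT u -> measurable_fun setT v ->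
  LlogLnorm 1 a2 (fun x => u x * v x * \1_B x)%R <=
  LlogLnorm +oo a1 (fun x => u x * \1_B x)%R *
  LlogLnorm 1 a2 (fun x => v x * \1_B x)%R.
Proof.
move=> mfu mfv; have [mu0|mu_gt0] := eqVneq (mu setT) 0.
  by rewrite !LlogLnorm_fin_measure0 ?oner_neq0 ?mule0.
have {}mu_gt0 : 0 < mu setT by rewrite lt0e mu_gt0 measure_ge0.
have M0 := LlogLnorm_ge0 +oo a1 (fun x => u x * \1_B x)%R mu_gt0.
apply: ge_ereal_sup => _ [s s0 <-].
apply: le_trans (LlogL_term_mul_le_ess_sup a2 mfu mfv s0 M0) _.
by apply: (lee_wpmul2l M0); rewrite LlogL_term_le_norm.
Qed.

Lemma LlogLnorm_mul_indic_le (u v : T -> R) (B : set T) (q1 q2 : \bar R)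
    (a1 a2 : R) :
  measurable_fun setT u -> measurable_fun setT v ->
  1 <= q1 -> 1 <= q2 -> (recip_exp R q1 + recip_exp R q2 = 1)%R ->
  LlogLnorm 1 (a1 * recip_exp R q1 + a2 * recip_exp R q2)
    (fun x => u x * v x * \1_B x)%R <=
  LlogLnorm q1 a1 (fun x => u x * \1_B x)%R *
  LlogLnorm q2 a2 (fun x => v x * \1_B x)%R.
Proof.
move=> mfu mfv; case: q1 => [r1| |]; case: q2 => [r2| |] //= q11 q21 qq.
- apply: LlogLnorm_mul_indic_le_fin => //.
  + by rewrite (lt_le_trans ltr01) -?lee_fin.
  + by rewrite (lt_le_trans ltr01) -?lee_fin.
- have -> : r1 = 1%R by apply/eqP; rewrite -invr_eq1 -qq addr0.
  rewrite mulr0 addr0 invr1 mulr1 muleC.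
  have -> : (fun x => u x * v x * \1_B x)%R = (fun x => v x * u x * \1_B x)%R.
    by apply/funext => x; rewrite (mulrC (u x)).
  exact: LlogLnorm_mul_indic_le_ess_sup.
- have -> : r2 = 1%R by apply/eqP; rewrite -invr_eq1 -qq add0r.
  rewrite mulr0 add0r invr1 mulr1.
  exact: LlogLnorm_mul_indic_le_ess_sup.
- by move: qq; rewrite addr0 => /eqP; rewrite eq_sym oner_eq0.
Qed.

Lemma LlogLnorm_mul_le (u v : T -> R) (q1 q2 : \bar R) (a1 a2 : R) :
  measurable_fun setT u -> measurable_fun setT v ->
  1 <= q1 -> 1 <= q2 -> (recip_exp R q1 + recip_exp R q2 = 1)%R ->
  LlogLnorm 1 (a1 * recip_exp R q1 + a2 * recip_exp R q2) (fun x => u x * v x)%R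
    <= LlogLnorm q1 a1 u * LlogLnorm q2 a2 v.
Proof.
move=> mfu mfv q11 q21 qq.
have := LlogLnorm_mul_indic_le setT a1 a2 mfu mfv q11 q21 qq.
have mul_indicT (f : T -> R) : (fun x => f x * \1_setT x)%R = f.
  by apply/funext => x; rewrite indicT mulr1.
by rewrite !mul_indicT.
Qed.

Lemma sup_LlogLnorm_mul_indic_le (I : Type) (B : I -> set T) (u v : T -> R)
    (q1 q2 : \bar R) (a1 a2 : R) :
  measurable_fun setT u -> measurable_fun setT v ->
  1 <= q1 -> 1 <= q2 -> (recip_exp R q1 + recip_exp R q2 = 1)%R ->
  ereal_sup [set LlogLnorm 1 (a1 * recip_exp R q1 + a2 * recip_exp R q2)
                 (fun x => u x * v x * \1_(B i) x)%R | i in setT] <=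
  ereal_sup [set LlogLnorm q1 a1 (fun x => u x * \1_(B i) x)%R | i in setT] *
  ereal_sup [set LlogLnorm q2 a2 (fun x => v x * \1_(B i) x)%R | i in setT].
Proof.
move=> mfu mfv q11 q21 qq; apply: ge_ereal_sup => _ [i _ <-].
have ub q a (w : T -> R) : LlogLnorm q a (fun x => w x * \1_(B i) x)%R <=
    ereal_sup [set LlogLnorm q a (fun x => w x * \1_(B j) x)%R | j in setT].
  by apply: ereal_sup_ubound; exists i.
have [mu0|mu_gt0] := eqVneq (mu setT) 0; last first.
  have {}mu_gt0 : 0 < mu setT by rewrite lt0e mu_gt0 measure_ge0.
  apply: le_trans (LlogLnorm_mul_indic_le (B i) a1 a2 mfu mfv q11 q21 qq) _.
  by apply: lee_pmul; rewrite ?LlogLnorm_ge0 ?ub.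
(* For a null measure an L^oo factor is -oo, so the other factor must vanish. *)
rewrite LlogLnorm_fin_measure0 ?oner_neq0 //.
have sup0 r a (w : T -> R) : r != 0%R ->
    ereal_sup [set LlogLnorm r%:E a (fun x => w x * \1_(B j) x)%R
              | j in setT] = 0.
  move=> r0; apply/eqP; rewrite eq_le.
  rewrite (le_trans (LlogLnorm_fin_ge0 _ _ _) (ub _ _ _)) andbT.
  by apply: ge_ereal_sup => _ [j _ <-]; rewrite LlogLnorm_fin_measure0.
move: q11 q21 qq; case: q1 => [r1| |]; case: q2 => [r2| |] //= q11 q21 qq.
- by rewrite sup0 ?mul0e // gt_eqF // (lt_le_trans ltr01) -?lee_fin.
- by rewrite sup0 ?mul0e // gt_eqF // (lt_le_trans ltr01) -?lee_fin.
- by rewrite [X in _ * X]sup0 ?mule0 // gt_eqF // (lt_le_trans ltr01) -?lee_fin.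
- by move: qq; rewrite addr0 => /eqP; rewrite eq_sym oner_eq0.
Qed.

End LlogL_norms.

Theorem lemma2p2 (R : realType) (n : nat) (q1 q2 : \bar R) (alpha1 alpha2 : R) :
  1 <= q1 -> 1 <= q2 -> (0 <= alpha1)%R -> (0 <= alpha2)%R ->
  (recip_exp R q1 + recip_exp R q2 = 1)%R ->
  let alpha := (alpha1 * recip_exp R q1 + alpha2 * recip_exp R q2)%R in
  (forall f1 f2 : 'rV[R]_n -> R,
      in_LlogL R n q1 alpha1 f1 -> in_LlogL R n q2 alpha2 f2 ->
      LlogL_norm R n 1 alpha (fun x => f1 x * f2 x)%R
        <= LlogL_norm R n q1 alpha1 f1 * LlogL_norm R n q2 alpha2 f2) /\
  (forall (g1 g2 : 'rV[R]_n -> R) (rho : R),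
      in_ul R n q1 alpha1 g1 -> in_ul R n q2 alpha2 g2 -> (0 < rho)%R ->
      ul_norm R n 1 alpha rho (fun x => g1 x * g2 x)%R
        <= ul_norm R n q1 alpha1 rho g1 * ul_norm R n q2 alpha2 rho g2).
Proof.
move=> q11 q21 _ _ qq alpha; split.
  move=> f1 f2 [[mf1 _] _] [[mf2 _] _].
  exact: (LlogLnorm_mul_le (lebn R n) alpha1 alpha2 mf1 mf2 q11 q21 qq).
move=> g1 g2 rho [[mg1 _] _] [[mg2 _] _] _.
exact: (sup_LlogLnorm_mul_indic_le (lebn R n) (fun z => eball R n z rho)
  alpha1 alpha2 mg1 mg2 q11 q21 qq).
Qed.
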